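(* Let $(\mathcal{M},d)$ be a bounded, separable unique geodesic space, and suppose that for every pair $\alpha,\beta\in\mathcal{M}$ a geodesic transport map $\Gamma_{\alpha,\beta}:\mathcal{M}\to\mathcal{M}$ is given, i.e. a map assigning to each $\omega\in\mathcal{M}$ a unique point $\Gamma_{\alpha,\beta}(\omega)\in\mathcal{M}$. Let $(Y_0,Y_1,D)$ be random, with $D\in\{0,1\}$, potential outcomes $Y_t(0),Y_t(1)\in\mathcal{M}$ for $t\in\{0,1\}$, and observed outcomes $Y_0=Y_0(0)$ and $Y_1=DY_1(1)+(1-D)Y_1(0)$ (i.e. $Y_1=Y_1(1)$ if $D=1$ and $Y_1=Y_1(0)$ if $D=0$). For $d,t\in\{0,1\}$ and $a\in\{0,1\}$ put $\nu_{d,t}(a)=E_\oplus(Y_t(a)\mid D=d)$ and $\nu_{d,t}=E_\oplus(Y_t\mid D=d)$, and define the geodesic average treatment effect on the treated (GATT) as the geodesic $\tau=\gamma_{\nu_{1,1}(0),\nu_{1,1}(1)}$. Assume the parallel trends condition \[\Gamma_{\nu_{0,0}(0),\nu_{0,1}(0)}(\nu_{1,0}(0))=\nu_{1,1}(0).\] Then \[\tau=\ominus\gamma_{\nu_{0,0},\nu_{0,1}}\oplus\gamma_{\nu_{1,0},\nu_{1,1}}=\gamma_{\nu_{1,1}',\nu_{1,1}},\qquad\text{where } \nu_{1,1}'=\Gamma_{\nu_{0,0},\nu_{0,1}}(\nu_{1,0}).\]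
   Context: A unique geodesic space is a metric space in which any two points $\alpha,\beta$ are joined by exactly one geodesic $\gamma_{\alpha,\beta}:[0,1]\to\mathcal{M}$, i.e. a constant-speed curve with $\gamma_{\alpha,\beta}(0)=\alpha$, $\gamma_{\alpha,\beta}(1)=\beta$ whose length equals $d(\alpha,\beta)$. For a random object $Y$ in $\mathcal{M}$ and an event/variable $X$, the conditional Fréchet mean is $E_\oplus(Y\mid X)=\operatorname{argmin}_{\omega\in\mathcal{M}}E\{d^2(Y,\omega)\mid X\}$; all Fréchet means appearing are assumed to exist and be unique. For $\alpha,\beta,\omega,\zeta\in\mathcal{M}$, the difference of geodesics is defined as $\ominus\gamma_{\alpha,\beta}\oplus\gamma_{\omega,\zeta}:=\gamma_{\zeta',\zeta}$ with $\zeta'=\Gamma_{\alpha,\beta}(\omega)$. *)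

From HB Require Import structures.
From mathcomp Require Import all_boot all_order all_algebra.
From mathcomp Require Import all_classical all_reals all_analysis.
Set Implicit Arguments. Unset Strict Implicit. Unset Printing Implicit Defensive.
Import Order.TTheory GRing.Theory Num.Theory.
Local Open Scope classical_set_scope.
Local Open Scope ring_scope.

Section Defs.
Variables (R : realType) (M : Type) (dist : M -> M -> R).

Definition is_metric : Prop :=
  [/\ forall x y, 0 <= dist x y,
      forall x y, dist x y = 0 <-> x = y,
      forall x y, dist x y = dist y x &
      forall x y z, dist x z <= dist x y + dist y z].

Definition metric_bounded : Prop := exists B : R, forall x y, dist x y <= B.

Definition metric_separable : Prop :=
  exists S : set M, countable S /\
    forall x (e : R), 0 < e -> exists2 s, S s & dist x s < e.

(* g : [0,1] -> M (values outside [0,1] irrelevant) is a constant-speed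
   curve from a to b whose length is dist a b *)
Definition is_geodesic (a b : M) (g : R -> M) : Prop :=
  [/\ g 0 = a, g 1 = b &
      forall s t, 0 <= s <= 1 -> 0 <= t <= 1 ->
        dist (g s) (g t) = `|s - t| * dist a b].

Definition unique_geodesic_space : Prop :=
  forall a b, (exists g, is_geodesic a b g) /\
    forall g h, is_geodesic a b g -> is_geodesic a b h ->
      forall t, 0 <= t <= 1 -> g t = h t.

(* difference of geodesics:  ominus gamma_{a,b} oplus gamma_{w,z} := gamma_{Gamma_{a,b}(w), z} *)
Definition geod_diff (geod : M -> M -> R -> M) (Gamma : M -> M -> M -> M)
  (a b w z : M) : R -> M := geod (Gamma a b w) z.
End Defs.

Section Prob.
Context {d : measure_display} {T : measurableType d} {R : realType} {M : Type}.
Variables (dist : M -> M -> R) (P : probability T R).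

Definition cond_sqdist (Y : T -> M) (A : set T) (w : M) : \bar R :=
  ((\int[P]_(x in A) ((dist (Y x) w) ^+ 2)%:E) * ((fine (P A))^-1)%:E)%E.

Definition is_cond_frechet_mean (Y : T -> M) (A : set T) (w : M) : Prop :=
  forall w', (cond_sqdist Y A w <= cond_sqdist Y A w')%E.

Definition cond_frechet_mean (Y : T -> M) (A : set T) (w : M) : Prop :=
  is_cond_frechet_mean Y A w /\
  forall w', is_cond_frechet_mean Y A w' -> w' = w.

(* Y is a random object: Borel measurable, equivalently (M separable)
   every x |-> dist (Y x) w is measurable *)
Definition random_object (Y : T -> M) : Prop :=
  forall w, measurable_fun setT (fun x => dist (Y x) w).
End Prob.

From HB Require Import structures.
From mathcomp Require Import all_boot all_order all_algebra.
From mathcomp Require Import all_classical all_reals all_analysis.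
Import Order.TTheory GRing.Theory Num.Theory.
Local Open Scope classical_set_scope.
Local Open Scope ring_scope.

(* A conditional Frechet mean given an event depends only on the values of the
   outcome on that event.  On {D = 1} the observed outcome Y1 is Y1(1) and on
   {D = 0} it is Y1(0), while Y0 = Y0(0) everywhere; hence nu_{1,1} = nu_{1,1}(1),
   nu_{0,0} = nu_{0,0}(0), nu_{0,1} = nu_{0,1}(0), nu_{1,0} = nu_{1,0}(0), and
   parallel trends turns the difference of geodesics into tau. *)

Section ConditionalFrechetMean.
Context {d : measure_display} {T : measurableType d} {R : realType} {M : Type}.
Variables (dist : M -> M -> R) (P : probability T R).

Lemma cond_sqdist_eq_on (Y Y' : T -> M) (A : set T) :
  {in A, Y =1 Y'} -> cond_sqdist dist P Y A =1 cond_sqdist dist P Y' A.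
Proof.
move=> eqYY' w; rewrite /cond_sqdist; congr (_ * _)%E.
by apply: eq_integral => x Ax; rewrite eqYY'.
Qed.

Lemma cond_frechet_mean_eq_on (Y Y' : T -> M) (A : set T) (w w' : M) :
  {in A, Y =1 Y'} ->
  cond_frechet_mean dist P Y A w -> cond_frechet_mean dist P Y' A w' -> w = w'.
Proof.
move=> /cond_sqdist_eq_on eqE [minw _] [_ uniqw'].
apply: uniqw' => u; rewrite -!eqE; exact: minw.
Qed.

Lemma cond_frechet_mean_uniq (Y : T -> M) (A : set T) (w w' : M) :
  cond_frechet_mean dist P Y A w -> cond_frechet_mean dist P Y A w' -> w = w'.
Proof. exact: cond_frechet_mean_eq_on. Qed.

End ConditionalFrechetMean.

Theorem theorem3p1
  (R : realType) (M : Type) (dist : M -> M -> R)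
  (geod : M -> M -> R -> M) (Gamma : M -> M -> M -> M)
  (d : measure_display) (T : measurableType d) (P : probability T R)
  (D : T -> bool) (Y00 Y01 Y10 Y11 : T -> M)
  (nu110 nu111 nu000 nu010 nu100 nu00 nu01 nu10 nu11 : M) :
  is_metric dist -> metric_bounded dist -> metric_separable dist ->
  unique_geodesic_space dist ->
  (forall a b, is_geodesic dist a b (geod a b)) ->
  measurable [set x | D x] ->
  random_object dist Y00 -> random_object dist Y01 ->
  random_object dist Y10 -> random_object dist Y11 ->
  let Y0 := Y00 in
  let Y1 := fun x => if D x then Y11 x else Y10 x in
  let D1 := [set x | D x] in
  let D0 := [set x | ~~ D x] in
  (* nu_{d,t}(a) = E_+(Y_t(a) | D = d) *)
  cond_frechet_mean dist P Y10 D1 nu110 ->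
  cond_frechet_mean dist P Y11 D1 nu111 ->
  cond_frechet_mean dist P Y00 D0 nu000 ->
  cond_frechet_mean dist P Y10 D0 nu010 ->
  cond_frechet_mean dist P Y00 D1 nu100 ->
  (* nu_{d,t} = E_+(Y_t | D = d) *)
  cond_frechet_mean dist P Y0 D0 nu00 ->
  cond_frechet_mean dist P Y1 D0 nu01 ->
  cond_frechet_mean dist P Y0 D1 nu10 ->
  cond_frechet_mean dist P Y1 D1 nu11 ->
  (* parallel trends *)
  Gamma nu000 nu010 nu100 = nu110 ->
  let tau := geod nu110 nu111 in
  let nu11' := Gamma nu00 nu01 nu10 in
  tau = geod_diff geod Gamma nu00 nu01 nu10 nu11 /\
  geod_diff geod Gamma nu00 nu01 nu10 nu11 = geod nu11' nu11.
Proof.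
move=> _ _ _ _ _ _ _ _ _ _ Y0 Y1 D1 D0 nu110P nu111P nu000P nu010P nu100P
  nu00P nu01P nu10P nu11P parallel_trends tau nu11'.
split=> //; rewrite /tau /geod_diff /nu11' -parallel_trends.
have -> : nu111 = nu11.
  by apply: cond_frechet_mean_eq_on nu111P nu11P => x; rewrite inE /Y1 => ->.
have -> : nu010 = nu01.
  apply: cond_frechet_mean_eq_on nu010P nu01P => x.
  by rewrite inE /Y1 /D0 /= => /negbTE ->.
have -> : nu000 = nu00 by apply: cond_frechet_mean_uniq nu000P nu00P.
by have -> : nu100 = nu10 by apply: cond_frechet_mean_uniq nu100P nu10P.
Qed.
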